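(* Let $\mathbb{F}$ be a field, $\mathcal{S}\subseteq 2^{[n]}$ a Sperner family and $h:\mathcal{S}\to 2^{[n]}$ a function with $h(S)\subseteq S$ for every $S\in\mathcal{S}$. Then $\mathbb{G}=\mathbb{G}(\mathcal{S},h)$ is a Gröbner basis of the ideal $\langle\mathbb{G}\rangle\subseteq\mathbb{F}[x_1,\dots,x_n]$ with respect to some term order if and only if $|\mathcal{H}(\mathcal{S})|=|\mathcal{F}(\mathcal{S},h)|$.
   Context: $[n]=\{1,\dots,n\}$. A Sperner family is a family of sets none of which is contained in another. For $H\subseteq S\subseteq[n]$, $\mathcal{Q}_{S,H}=\{H\cup B: B\subseteq[n]\setminus S\}$; $\mathcal{H}(\mathcal{S})=\{F\subseteq[n]: \text{no } S\in\mathcal{S} \text{ satisfies } S\subseteq F\}$; $\mathcal{F}(\mathcal{S},h)=2^{[n]}\setminus\bigcup_{S\in\mathcal{S}}\mathcal{Q}_{S,h(S)}$. For $H\subseteq[n]$ put $\mathbf{x}_H=\prod_{i\in H}x_i$, and for $H\subseteq S\subseteq[n]$ put $f_{S,H}(\mathbf{x})=\mathbf{x}_H\prod_{i\in S\setminus H}(x_i-1)$. Define $\mathbb{G}(\mathcal{S},h)=\{f_{S,h(S)}: S\in\mathcal{S}\}\cup\{x_i^2-x_i: i\in[n]\}$. A term order is a total order on monomials of $\mathbb{F}[x_1,\dots,x_n]$ with $1$ minimal and compatible with multiplication by monomials; $\mathrm{lm}(f)$ is the largest monomial of $f\neq0$ with nonzero coefficient. A finite $\mathbb{G}\subseteq I$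 is a Gröbner basis of an ideal $I$ with respect to a term order if for every nonzero $f\in I$ some $g\in\mathbb{G}$ has $\mathrm{lm}(g)$ dividing $\mathrm{lm}(f)$. *)

From mathcomp Require Import all_boot all_order all_algebra.
From mathcomp Require Import mpoly.
Set Implicit Arguments. Unset Strict Implicit. Unset Printing Implicit Defensive.
Import GRing.Theory.
Local Open Scope ring_scope.

Definition sperner (n : nat) (fam : {set {set 'I_n}}) : Prop :=
  forall A B, A \in fam -> B \in fam -> A \subset B -> A = B.

Definition Qset (n : nat) (S H : {set 'I_n}) : {set {set 'I_n}} :=
  [set H :|: B | B in powerset (~: S)].

Definition Hfam (n : nat) (fam : {set {set 'I_n}}) : {set {set 'I_n}} :=
  [set F : {set 'I_n} | [forall A in fam, ~~ (A \subset F)]].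

Definition Ffam (n : nat) (fam : {set {set 'I_n}})
    (h : {set 'I_n} -> {set 'I_n}) : {set {set 'I_n}} :=
  ~: (\bigcup_(A in fam) Qset A (h A)).

Definition xH (F : fieldType) (n : nat) (H : {set 'I_n}) : {mpoly F[n]} :=
  \prod_(i in H) 'X_i.

Definition fSH (F : fieldType) (n : nat) (S H : {set 'I_n}) : {mpoly F[n]} :=
  xH F H * \prod_(i in S :\: H) ('X_i - 1).

Definition Gbasis (F : fieldType) (n : nat) (fam : {set {set 'I_n}})
    (h : {set 'I_n} -> {set 'I_n}) : seq {mpoly F[n]} :=
  map (fun A => fSH F A (h A)) (enum fam) ++
  map (fun i : 'I_n => 'X_i ^+ 2 - 'X_i) (enum 'I_n).

Definition in_ideal (F : fieldType) (n : nat) (G : seq {mpoly F[n]})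
    (f : {mpoly F[n]}) : Prop :=
  exists c : seq {mpoly F[n]}, f = \sum_(i < size G) c`_i * G`_i.

Definition term_order (n : nat) (le : rel 'X_{1..n}) : Prop :=
  [/\ reflexive le, antisymmetric le, transitive le & total le] /\
  (forall m, le 0%MM m) /\
  (forall m1 m2 p, le m1 m2 -> le (m1 + p)%MM (m2 + p)%MM).

Definition is_lm (F : fieldType) (n : nat) (le : rel 'X_{1..n})
    (f : {mpoly F[n]}) (m : 'X_{1..n}) : Prop :=
  m \in msupp f /\ forall m', m' \in msupp f -> le m' m.

Definition groebner (F : fieldType) (n : nat) (le : rel 'X_{1..n})
    (G : seq {mpoly F[n]}) (I : {mpoly F[n]} -> Prop) : Prop :=
  (forall g, g \in G -> I g) /\
  forall f, I f -> f != 0 ->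
    exists2 g, g \in G &
      exists mg mf, [/\ is_lm le g mg, is_lm le f mf & (mg <= mf)%MM].

(* Evaluate polynomials at the 0/1 points [x ⊆ [n]].  The common zeros of
   G(S,h) are exactly the points of F(S,h), and a multilinear polynomial
   vanishing on F(S,h) lies in <G>, because the interpolation polynomial of a
   point outside F(S,h) is a multiple of some f_{S,h(S)}.  For every term order
   lm(f_{S,h(S)}) = x_S and lm(x_i^2 - x_i) = x_i^2, so the standard monomials
   are the x_T with T in H(S).

   Consider the matrix M = ([T ⊆ x]) with T in H(S) and x in F(S,h).  On F(S,h)
   the equation f_{S,h(S)} = 0 expresses [T ⊆ x], for T outside H(S), through
   indicators of smaller sets; together with the triangularity of the zeta
   matrix of inclusion this makes the columns of M independent, so
   |F(S,h)| <= |H(S)|.  A row relation of M is a nonzero element of <G>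
   supported on standard monomials, which a Gröbner basis rules out; so if G is
   a Gröbner basis, M is square.  Conversely, if M is square its rows are
   independent, and a nonzero f in <G> whose degree-compatible leading
   monomial were standard would, evaluated on F(S,h) and reduced as above,
   yield a row relation of M. *)

From mathcomp Require Import all_boot all_order all_algebra.
From mathcomp Require Import mpoly.
Set Implicit Arguments. Unset Strict Implicit. Unset Printing Implicit Defensive.
Import Order.TTheory GRing.Theory.
Local Open Scope ring_scope.

Section SetMonomials.

Variable n : nat.
Implicit Types (A T : {set 'I_n}) (u : 'X_{1..n}).

Definition mnm_set T : 'X_{1..n} := [multinom (i \in T : nat) | i < n].

Definition mnm_supp u : {set 'I_n} := [set i | 0 < u i]%N.

Lemma mnm_setE T i : mnm_set T i = (i \in T).
Proof. by rewrite mnmE. Qed.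

Lemma mnm_set_inj : injective mnm_set.
Proof.
move=> A B /mnmP eqAB; apply/setP => i.
by have := eqAB i; rewrite !mnm_setE => /eqP; case: (i \in A); case: (i \in B).
Qed.

Lemma mnm_set_le A T : (mnm_set A <= mnm_set T)%MM = (A \subset T).
Proof.
apply/mnm_lepP/subsetP => [le_AT i iA | sAT i]; rewrite ?mnm_setE.
  by have := le_AT i; rewrite !mnm_setE iA; case: (i \in T).
by case iA: (i \in A); rewrite ?(sAT _ iA).
Qed.

Lemma mnm_supp_set T : mnm_supp (mnm_set T) = T.
Proof. by apply/setP => i; rewrite inE mnm_setE; case: (i \in T). Qed.

Lemma mnm_set_supp_le u : (mnm_set (mnm_supp u) <= u)%MM.
Proof. by apply/mnm_lepP => i; rewrite mnm_setE inE; case: (u i). Qed.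

Lemma mnm_set_supp u : (forall i, u i <= 1)%N -> u = mnm_set (mnm_supp u).
Proof. by move=> u_le1; apply/mnmP => i; rewrite mnm_setE inE; case: (u i) (u_le1 i) => [|[]]. Qed.

Lemma card_set_sum T : #|T| = (\sum_i (i \in T : nat))%N.
Proof. by rewrite -sum1_card big_mkcond; apply: eq_bigr => i _; case: (i \in T). Qed.

Lemma mdeg_mnm_set T : mdeg (mnm_set T) = #|T|.
Proof. by rewrite mdegE card_set_sum; apply: eq_bigr => i _; rewrite mnm_setE. Qed.

Lemma card_mnm_supp u : (#|mnm_supp u| <= mdeg u)%N.
Proof. by rewrite card_set_sum mdegE; apply: leq_sum => i _; rewrite inE; case: (u i). Qed.

End SetMonomials.

Section ZeroOneEvaluation.

Variables (F : fieldType) (n : nat).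
Implicit Types (A B H J T x : {set 'I_n}) (u : 'X_{1..n}) (f : {mpoly F[n]}).

Definition chi x : 'I_n -> F := fun i => (i \in x)%:R.

Definition subset_ind T x : F := (T \subset x)%:R.

Lemma subset_indU A B x : subset_ind (A :|: B) x = subset_ind A x * subset_ind B x.
Proof. by rewrite /subset_ind subUset -natrM mulnb. Qed.

Lemma xH_mnm_set T : xH F T = 'X_[mnm_set T].
Proof.
have -> : mnm_set T = (\sum_(i in T) U_(i))%MM.
  apply/mnmP => i; rewrite mnm_setE mnm_sumE.
  rewrite (eq_bigr (fun j => (j == i : nat))); last by move=> j _; rewrite mnm1E.
  case iT: (i \in T); last first.
    by rewrite big1 // => j jT; case: eqP => // eq_ji; rewrite -eq_ji jT in iT.
  by rewrite (bigD1 i) //= eqxx big1 // => j /andP [_ /negbTE ->].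
by apply/esym/big_morph => [m1 m2|]; rewrite ?mpolyXD ?mpolyX0.
Qed.

Lemma meval_chi_X x u : ('X_[u] : {mpoly F[n]}).@[chi x] = subset_ind (mnm_supp u) x.
Proof.
rewrite mevalX /subset_ind.
have [/subsetP sux | /subsetPn [i iu ix]] := boolP (mnm_supp u \subset x).
  apply: big1 => i _; rewrite /chi; case: (posnP (u i)) => [-> | u_i]; first by rewrite expr0.
  by rewrite sux ?inE // expr1n.
move: iu; rewrite inE => /lt0n_neq0 u_i.
by rewrite (bigD1 i) //= /chi (negbTE ix) expr0n (negbTE u_i) mul0r.
Qed.

Definition mlin (a : {set 'I_n} -> F) : {mpoly F[n]} := \sum_J a J *: 'X_[mnm_set J].

Lemma mcoeff_mlin a T : (mlin a)@_(mnm_set T) = a T.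
Proof.
rewrite /mlin raddf_sum (bigD1 T) //= mcoeffZ mcoeffX eqxx mulr1 big1 ?addr0 // => J neq_JT.
by rewrite mcoeffZ mcoeffX (inj_eq (@mnm_set_inj n)) (negbTE neq_JT) mulr0.
Qed.

Lemma msupp_mlin a u : u \in msupp (mlin a) -> exists2 J, u = mnm_set J & a J != 0.
Proof.
rewrite mcoeff_msupp => nz_u.
have [/existsP [J /andP [/eqP -> a_J]] | /existsPn none] :=
  boolP [exists J, (u == mnm_set J) && (a J != 0)]; first by exists J.
move: nz_u; rewrite /mlin raddf_sum big1 ?eqxx // => J _ /=; rewrite mcoeffZ mcoeffX.
case: eqP => [eq_u | _]; last by rewrite mulr0.
by move: (none J); rewrite eq_u eqxx negbK => /eqP ->; rewrite mul0r.
Qed.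

Lemma meval_mlin a x : (mlin a).@[chi x] = \sum_J a J * subset_ind J x.
Proof.
by rewrite /mlin raddf_sum; apply: eq_bigr => J _; rewrite /= mevalZ meval_chi_X mnm_supp_set.
Qed.

Definition set_coef f T : F := \sum_(u <- msupp f | mnm_supp u == T) f@_u.

Lemma meval_chi f x : f.@[chi x] = \sum_T set_coef f T * subset_ind T x.
Proof.
rewrite mevalE; under eq_bigr => u _ do rewrite -mevalX meval_chi_X.
rewrite /set_coef; symmetry.
rewrite (eq_bigr (fun T => \sum_(u <- msupp f | mnm_supp u == T) f@_u * subset_ind T x));
  last by move=> T _; exact: big_distrl.
under eq_bigr do rewrite big_mkcond; rewrite exchange_big; apply: eq_bigr => u _ /=.
by rewrite -big_mkcond (big_pred1 (mnm_supp u)) // => T; rewrite /= eq_sym.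
Qed.

Lemma set_coef_card f T : set_coef f T != 0 -> (#|T| <= mdeg (mlead f))%N.
Proof.
move=> nz_T; have /hasP [u u_f /eqP <-] : has (fun u => mnm_supp u == T) (msupp f).
  apply: contraNT nz_T => /hasPn none; rewrite /set_coef big1_seq // => u /andP [uT u_f].
  by have := none u u_f; rewrite uT.
exact: leq_trans (card_mnm_supp u) (lemc_mdeg (msupp_le_mlead u_f)).
Qed.

Lemma set_coef_mlead f T : f != 0 -> mlead f = mnm_set T -> set_coef f T = f@_(mlead f).
Proof.
move=> nz_f lead; have f_lead := mlead_supp nz_f.
rewrite /set_coef big_mkcond (bigD1_seq (mlead f)) ?msupp_uniq //=.
rewrite {1}lead mnm_supp_set eqxx big1_seq ?addr0 // => u /andP [ne_u u_f].
case: eqP => // supp_u; case/eqP: ne_u; apply: le_anti; rewrite msupp_le_mlead //=.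
by apply: lem_leo; rewrite lead -supp_u mnm_set_supp_le.
Qed.

Definition delta_pt x : {mpoly F[n]} := \prod_i (if i \in x then 'X_i else 1 - 'X_i).

Lemma xH_sum_delta_pt T : xH F T = \sum_x subset_ind T x *: delta_pt x.
Proof.
rewrite /xH (big_mkcond (fun i => i \in T)).
rewrite (eq_bigr (fun i => 'X_i + (if i \in T then 0 else 1 - 'X_i))); last first.
  by move=> i _; case: (i \in T); rewrite ?addr0 // addrC subrK.
rewrite bigA_distr; apply: eq_bigr => x _ /=; rewrite /subset_ind.
case: (boolP (T \subset x)) => [/subsetP sTx | /subsetPn [i iT ix]]; last first.
  by rewrite (bigD1 i) //= (negbTE ix) iT mul0r scale0r.
rewrite scale1r; apply: eq_bigr => i _; case ix: (i \in x) => //.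
by case iT: (i \in T) => //; rewrite (sTx _ iT) in ix.
Qed.

Lemma mlin_interpolation a : mlin a = \sum_x (mlin a).@[chi x] *: delta_pt x.
Proof.
rewrite {1}/mlin; under eq_bigr do rewrite -xH_mnm_set xH_sum_delta_pt scaler_sumr.
rewrite exchange_big; apply: eq_bigr => x _; rewrite meval_mlin scaler_suml.
by apply: eq_bigr => J _; rewrite scalerA.
Qed.

Lemma fSH_prod A H : H \subset A ->
  fSH F A H = \prod_i (if i \in H then 'X_i else if i \in A then 'X_i - 1 else 1).
Proof.
move=> /subsetP sHA; rewrite /fSH /xH !(big_mkcond (fun i => i \in _)) -big_split /=.
by apply: eq_bigr => i _; rewrite inE; case: (i \in H); rewrite /= ?mulr1 ?mul1r.
Qed.

Lemma meval_fSH_chi A H x : H \subset A -> x :&: A != H -> (fSH F A H).@[chi x] = 0.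
Proof.
move=> sHA neq_xA; rewrite fSH_prod // rmorph_prod /=.
have /existsP [i wit_i] :
    [exists i, ((i \in H) && (i \notin x)) || [&& i \in A, i \notin H & i \in x]].
  apply: contraR neq_xA => /existsPn none; apply/eqP/setP => i; rewrite !inE.
  move: (none i) (subsetP sHA i).
  by case: (i \in x); case: (i \in A); case: (i \in H) => //= _ /(_ isT).
rewrite (bigD1 i) //=; case/orP: wit_i => [/andP [iH ix] | /and3P [iA iH ix]].
  by rewrite iH mevalXU /chi (negbTE ix) mul0r.
by rewrite (negbTE iH) iA mevalB mevalXU /chi ix meval1 subrr mul0r.
Qed.

Lemma delta_pt_fSH A H x : H \subset A -> x :&: A = H ->
  exists q, delta_pt x = q * fSH F A H.
Proof.
move=> sHA xA.
exists (\prod_i (if i \in A then (if i \in H then 1 else -1) else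
                 (if i \in x then 'X_i else 1 - 'X_i))).
rewrite fSH_prod // -big_split; apply: eq_bigr => i _ /=.
move: (congr1 (fun S : {set _} => i \in S) xA) (subsetP sHA i); rewrite /= inE.
case: (i \in x); case: (i \in A); case: (i \in H) => //= _ _.
all: by rewrite ?mul1r ?mulr1 ?mulN1r ?opprB.
Qed.

Definition fSH_coef A H J : F := (J \subset A)%:R *
  \prod_i (if i \in J then 1 else if i \in H then 0 else if i \in A then -1 else 1).

Lemma fSH_coef_id A H : H \subset A -> fSH_coef A H A = 1.
Proof.
move=> /subsetP sHA; rewrite /fSH_coef subxx mul1r big1 // => i _.
by case iA: (i \in A) => //; case iH: (i \in H) => //; rewrite (sHA _ iH) in iA.
Qed.

Lemma fSH_coef_sub A H J : fSH_coef A H J != 0 -> J \subset A.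
Proof. by rewrite /fSH_coef; case: (J \subset A); rewrite ?mul0r ?eqxx. Qed.

Lemma fSH_mlin A H : H \subset A -> fSH F A H = mlin (fSH_coef A H).
Proof.
move=> sHA; rewrite fSH_prod //.
pose c i : F := if i \in H then 0 else if i \in A then -1 else 1.
rewrite (eq_bigr (fun i => (if i \in A then 'X_i else 0) + (c i)%:MP)); last first.
  move=> i _; rewrite /c; case iH: (i \in H); first by rewrite (subsetP sHA _ iH) addr0.
  by case: (i \in A); rewrite ?add0r ?raddfN /= rmorph1.
rewrite bigA_distr /mlin; apply: eq_bigr => J _; rewrite /fSH_coef.
case: (boolP (J \subset A)) => [/subsetP sJA | /subsetPn [i iJ iA]]; last first.
  by rewrite (bigD1 i) //= iJ (negbTE iA) !mul0r scale0r.
rewrite mul1r -mul_mpolyC rmorph_prod -xH_mnm_set /xH (big_mkcond (fun i => i \in J)) -big_split /=.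
apply: eq_bigr => i _; case iJ: (i \in J); first by rewrite (sJA _ iJ) rmorph1 mul1r.
by rewrite mulr1.
Qed.

End ZeroOneEvaluation.

Section Ideals.

Variables (F : fieldType) (n : nat) (G : seq {mpoly F[n]}).
Implicit Types f g q : {mpoly F[n]}.

Lemma in_ideal0 : in_ideal G 0.
Proof. by exists [::]; rewrite big1 // => i _; rewrite nth_nil mul0r. Qed.

Lemma in_idealD f g : in_ideal G f -> in_ideal G g -> in_ideal G (f + g).
Proof.
move=> [c ->] [d ->]; exists (mkseq (fun i => c`_i + d`_i) (size G)).
by rewrite -big_split; apply: eq_bigr => i _; rewrite nth_mkseq // mulrDl.
Qed.

Lemma in_idealMl q f : in_ideal G f -> in_ideal G (q * f).
Proof.
move=> [c ->]; exists (mkseq (fun i => q * c`_i) (size G)).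
by rewrite mulr_sumr; apply: eq_bigr => i _; rewrite nth_mkseq // mulrA.
Qed.

Lemma mem_in_ideal g : g \in G -> in_ideal G g.
Proof.
move=> gG; exists (mkseq (fun i => (i == index g G)%:R) (size G)).
rewrite (bigD1 (Ordinal (etrans (index_mem g G) gG))) //= big1 ?addr0.
  by rewrite nth_mkseq ?index_mem // eqxx mul1r nth_index.
move=> i /eqP neq_i; rewrite nth_mkseq //; case: eqP => [eq_i | _]; last by rewrite mul0r.
by case: neq_i; apply: val_inj.
Qed.

Lemma in_ideal_sum (I : finType) (P : pred I) (f : I -> {mpoly F[n]}) :
  (forall i, P i -> in_ideal G (f i)) -> in_ideal G (\sum_(i | P i) f i).
Proof.
by move=> f_G; apply: (big_ind (in_ideal G)) => //; [exact: in_ideal0 | exact: in_idealD].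
Qed.

Lemma meval_in_ideal v f :
  in_ideal G f -> (forall g, g \in G -> g.@[v] = 0) -> f.@[v] = 0.
Proof.
move=> [c ->] G_v; rewrite raddf_sum big1 // => i _ /=.
by rewrite mevalM (G_v _ (mem_nth 0 (ltn_ord i))) mulr0.
Qed.

End Ideals.

Section TermOrders.

Variables (F : fieldType) (n : nat) (le : rel 'X_{1..n}).
Hypothesis le_order : term_order le.

Lemma term_order_lem m1 m2 : (m1 <= m2)%MM -> le m1 m2.
Proof.
case: le_order => _ [le0 leD] le_m12.
by have := leD 0%MM (m2 - m1)%MM m1 (le0 _); rewrite add0m submK.
Qed.

Lemma is_lm_uniq (f : {mpoly F[n]}) m1 m2 : is_lm le f m1 -> is_lm le f m2 -> m1 = m2.
Proof.
case: le_order => [[_ anti _ _] _] [f_m1 max1] [f_m2 max2].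
by apply: anti; rewrite max1 ?max2.
Qed.

Lemma is_lm_fSH (A H : {set 'I_n}) : H \subset A -> is_lm le (fSH F A H) (mnm_set A).
Proof.
move=> sHA; rewrite fSH_mlin //; split.
  by rewrite mcoeff_msupp mcoeff_mlin fSH_coef_id // oner_neq0.
move=> m /msupp_mlin [J -> /fSH_coef_sub sJA].
by apply: term_order_lem; rewrite mnm_set_le.
Qed.

Lemma is_lm_sqX i : is_lm le ('X_i ^+ 2 - 'X_i : {mpoly F[n]}) (U_(i) *+ 2)%MM.
Proof.
have neq_U2 : (U_(i) != U_(i) *+ 2)%MM.
  by apply/eqP => /mnmP /(_ i); rewrite mulmnE mnm1E eqxx.
rewrite mpolyXn; split.
  by rewrite mcoeff_msupp mcoeffB !mcoeffX eqxx (negbTE neq_U2) subr0 oner_neq0.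
move=> m; rewrite mcoeff_msupp mcoeffB !mcoeffX.
have [<- _ | _] := eqVneq (U_(i) *+ 2)%MM m; first by case: le_order => [[le_refl _ _ _] _].
have [<- _ | _] := eqVneq U_(i)%MM m; last by rewrite subrr eqxx.
by apply: term_order_lem; apply/mnm_lepP => j; rewrite mulmnE leq_pmulr.
Qed.

End TermOrders.

Lemma mnmc_term_order n : term_order (fun m1 m2 : 'X_{1..n} => (m1 <= m2)%O).
Proof.
split; first by split; [exact: lexx | exact: le_anti | exact: le_trans | exact: le_total].
by split=> [m | m1 m2 p]; rewrite ?le0m ?lemc_add2l.
Qed.

Lemma is_lm_mlead (F : fieldType) n (f : {mpoly F[n]}) :
  f != 0 -> is_lm (fun m1 m2 => (m1 <= m2)%O) f (mlead f).
Proof. by move=> nz_f; split; [exact: mlead_supp | exact: msupp_le_mlead]. Qed.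

Section RowIndependence.

Variables (F : fieldType) (I J : finType) (K : I -> J -> F).
Implicit Types (P : {set I}) (Q : {set J}) (phi : J -> F).

Definition rows_indep P Q :=
  forall c : I -> F, (forall x, x \in Q -> \sum_(T in P) c T * K T x = 0) ->
  forall T, T \in P -> c T = 0.

Definition rows_mx P Q : 'M[F]_(#|P|, #|Q|) :=
  \matrix_(i, j) K (enum_val i) (enum_val j).

Lemma rows_indep_row_free P Q : rows_indep P Q <-> row_free (rows_mx P Q).
Proof.
split=> [indep | free_K]; last first.
  move=> c rel_c T TP; pose u := \row_(i < #|P|) c (enum_val i).
  have u0 : u *m rows_mx P Q = 0.
    apply/rowP => j; rewrite !mxE -[RHS](rel_c _ (enum_valP j)) [RHS]big_enum_val.
    by apply: eq_bigr => i _; rewrite !mxE.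
  have /rowP/(_ (enum_rank_in TP T)) := row_free_inj free_K (etrans u0 (esym (mul0mx _ _))).
  by rewrite !mxE enum_rankK_in.
rewrite -kermx_eq0; apply/eqP/row_matrixP => k; rewrite row0.
set u := row k _; have u0 : u *m rows_mx P Q = 0 by rewrite -row_mul mulmx_ker row0.
have [P0 | /card_gt0P/sig_eqW [T0 T0P]] := posnP #|P|.
  by apply/rowP => i; have := ltn_ord i; rewrite {2}P0.
pose c T := u 0 (enum_rank_in T0P T).
have c_val i : c (enum_val i) = u 0 i by rewrite /c enum_valK_in.
have rel_c x : x \in Q -> \sum_(T in P) c T * K T x = 0.
  move=> xQ; have /rowP/(_ (enum_rank_in xQ x)) := u0; rewrite !mxE => u0x.
  apply: etrans u0x; rewrite big_enum_val; apply: eq_bigr => i _.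
  by rewrite c_val /rows_mx !mxE enum_rankK_in.
by apply/rowP => i; rewrite -c_val (indep c rel_c) ?enum_valP // mxE.
Qed.

Lemma rows_indep_card P Q : rows_indep P Q -> (#|P| <= #|Q|)%N.
Proof. by move/rows_indep_row_free => /eqP <-; exact: rank_leq_col. Qed.

Definition spanned P Q phi :=
  exists e : I -> F, forall x, x \in Q -> phi x = \sum_(T in P) e T * K T x.

Lemma spanned_row P Q T : T \in P -> spanned P Q (K T).
Proof.
move=> TP; exists (fun T' => (T' == T)%:R) => x _.
rewrite (bigD1 T) //= eqxx mul1r big1 ?addr0 // => T' /andP [_ /negbTE ->].
by rewrite mul0r.
Qed.

Lemma spanned_subset P P' Q phi : P \subset P' -> spanned P Q phi -> spanned P' Q phi.
Proof.
move=> sPP' [e phi_e]; exists (fun T => (T \in P)%:R * e T) => x xQ.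
rewrite phi_e // [RHS](big_setID P) /= (setIidPr sPP') [X in _ + X]big1 ?addr0.
  by apply: eq_bigr => T TP; rewrite TP mul1r.
by move=> T /setDP [_ /negbTE ->]; rewrite !mul0r.
Qed.

Lemma spanned_sum P Q (X : Type) (r : seq X) (R : pred X) (c : X -> F) (phi : X -> J -> F) :
  (forall j, R j -> c j != 0 -> spanned P Q (phi j)) ->
  spanned P Q (fun x => \sum_(j <- r | R j) c j * phi j x).
Proof.
move=> span_phi; elim: r => [|j r [e phi_e]].
  by exists (fun _ => 0) => x _; rewrite big_nil big1 // => T _; rewrite mul0r.
case Rj: (R j); last by exists e => x xQ; rewrite big_cons Rj phi_e.
have [c0 | nz_c] := eqVneq (c j) 0.
  by exists e => x xQ; rewrite big_cons Rj c0 mul0r add0r phi_e.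
have [d phi_d] := span_phi j Rj nz_c; exists (fun T => c j * d T + e T) => x xQ.
rewrite big_cons Rj phi_e // phi_d // mulr_sumr -big_split /=.
by apply: eq_bigr => T _; rewrite mulrDl mulrA.
Qed.

Lemma spanned_orth P Q phi (a : J -> F) :
  spanned P Q phi -> (forall T, T \in P -> \sum_(x in Q) a x * K T x = 0) ->
  \sum_(x in Q) a x * phi x = 0.
Proof.
move=> [e phi_e] orth.
rewrite (eq_bigr (fun x => \sum_(T in P) a x * (e T * K T x))) => [|x xQ]; last first.
  by rewrite phi_e // mulr_sumr.
rewrite exchange_big big1 // => T TP.
transitivity (e T * \sum_(x in Q) a x * K T x); last by rewrite orth ?mulr0.
by rewrite mulr_sumr; apply: eq_bigr => x _; exact: mulrCA.
Qed.

End RowIndependence.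

Lemma rows_indep_tr (F : fieldType) (I J : finType) (K : I -> J -> F) (P : {set I}) (Q : {set J}) :
  rows_indep (fun x T => K T x) Q P -> #|P| = #|Q| -> rows_indep K P Q.
Proof.
move/rows_indep_row_free => free_tr eq_PQ; apply/rows_indep_row_free.
have tr_K : rows_mx (fun x T => K T x) Q P = (rows_mx K P Q)^T.
  by apply/matrixP => i j; rewrite !mxE.
by move: free_tr; rewrite /row_free tr_K mxrank_tr => /eqP ->; rewrite eq_PQ.
Qed.

Lemma subset_ind_rows_indep (F : fieldType) n (Q : {set {set 'I_n}}) :
  rows_indep (fun x T => subset_ind F T x) Q setT.
Proof.
move=> a rel_a; suff a0 k x : (#|~: x| < k)%N -> x \in Q -> a x = 0 by move=> x; apply: a0.
elim: k x => // k IH x lt_xk xQ; have := rel_a x (in_setT x).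
rewrite (bigD1 x) //= /subset_ind subxx mulr1 big1 ?addr0 // => y /andP [yQ neq_yx].
have [sxy | _] := boolP (x \subset y); last by rewrite mulr0.
have lt_yx : (#|~: y| < #|~: x|)%N.
  by apply: proper_card; rewrite properC properEneq eq_sym neq_yx.
by rewrite (IH y) ?mul0r // (leq_trans lt_yx).
Qed.

Lemma QsetP n (A H x : {set 'I_n}) : H \subset A -> (x \in Qset A H) = (x :&: A == H).
Proof.
move=> /subsetP sHA; apply/imsetP/eqP => [[B] | xA].
  rewrite inE => /subsetP sBC ->; apply/setP => i; rewrite !inE.
  case iH: (i \in H); first by rewrite (sHA _ iH).
  case iA: (i \in A); rewrite ?andbF //= andbT; apply/negP => iB.
  by have := sBC _ iB; rewrite inE iA.
exists (x :\: A); first by rewrite inE; apply/subsetP => i; rewrite !inE => /andP [].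
by rewrite -xA setID.
Qed.

Lemma HfamP n (fam : {set {set 'I_n}}) (T : {set 'I_n}) :
  reflect (forall A, A \in fam -> ~~ (A \subset T)) (T \in Hfam fam).
Proof. by rewrite inE; apply: forall_inP. Qed.

Lemma HfamPn n (fam : {set {set 'I_n}}) (T : {set 'I_n}) :
  reflect (exists2 A, A \in fam & A \subset T) (T \notin Hfam fam).
Proof. by rewrite inE negb_forall_in; apply: (iffP exists_inP) => [] [A Afam /negPn]; exists A. Qed.

Section GroebnerCriterion.

Variables (F : fieldType) (n : nat) (fam : {set {set 'I_n}}) (h : {set 'I_n} -> {set 'I_n}).
Hypothesis h_sub : forall A, A \in fam -> h A \subset A.
Implicit Types (A T x : {set 'I_n}) (f g : {mpoly F[n]}).

Local Notation G := (Gbasis F fam h).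
Local Notation K := (@subset_ind F n).

Lemma FfamP x : reflect (forall A, A \in fam -> x :&: A != h A) (x \in Ffam fam h).
Proof.
rewrite inE; apply: (iffP idP) => [nQ A Afam | nQ].
  by rewrite -QsetP ?h_sub //; apply: contra nQ => xQ; apply/bigcupP; exists A.
by apply/negP => /bigcupP [A Afam]; rewrite QsetP ?h_sub // (negbTE (nQ A Afam)).
Qed.

Lemma GbasisP g : reflect
  ((exists2 A, A \in fam & g = fSH F A (h A)) \/ exists i, g = 'X_i ^+ 2 - 'X_i) (g \in G).
Proof.
rewrite mem_cat; apply: (iffP orP) => [[] /mapP [y y_enum ->] | [[A Afam ->] | [i ->]]].
- by left; exists y; rewrite // -mem_enum.
- by right; exists y.
- by left; apply/mapP; exists A; rewrite ?mem_enum.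
- by right; apply/mapP; exists i; rewrite ?mem_enum.
Qed.

Lemma fSH_in_Gbasis A : A \in fam -> fSH F A (h A) \in G.
Proof. by move=> Afam; apply/GbasisP; left; exists A. Qed.

Lemma sqX_in_Gbasis i : 'X_i ^+ 2 - 'X_i \in G.
Proof. by apply/GbasisP; right; exists i. Qed.

Lemma meval_Gbasis_Ffam x : x \in Ffam fam h -> forall g, g \in G -> g.@[chi F x] = 0.
Proof.
move=> /FfamP xF g /GbasisP [[A Afam ->] | [i ->]].
  exact: meval_fSH_chi (h_sub Afam) (xF A Afam).
by rewrite mevalB rmorphXn /= mevalXU /chi; case: (i \in x); rewrite ?expr1n ?subrr // expr0n subrr.
Qed.

Lemma delta_pt_in_ideal x : x \notin Ffam fam h -> in_ideal G (delta_pt F x).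
Proof.
move=> xnF; have /exists_inP [A Afam /eqP xA] : [exists A in fam, x :&: A == h A].
  by apply: contraR xnF => /exists_inPn none; apply/FfamP.
have [q ->] := delta_pt_fSH F (h_sub Afam) xA.
by apply/in_idealMl/mem_in_ideal/fSH_in_Gbasis.
Qed.

Lemma mlin_in_ideal a :
  (forall x, x \in Ffam fam h -> (mlin a).@[chi F x] = 0) -> in_ideal G (mlin a).
Proof.
move=> a_F; rewrite mlin_interpolation; apply: in_ideal_sum => x _.
have [xF | xnF] := boolP (x \in Ffam fam h); first by rewrite a_F // scale0r; exact: in_ideal0.
by rewrite -mul_mpolyC; apply/in_idealMl/delta_pt_in_ideal.
Qed.

Lemma Gbasis_lm_not_le_Hfam le g m T : term_order le ->
  g \in G -> is_lm le g m -> T \in Hfam fam -> ~~ (m <= mnm_set T)%MM.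
Proof.
move=> le_order /GbasisP [[A Afam ->] | [i ->]] lm_g /HfamP T_H.
  by rewrite (is_lm_uniq le_order lm_g (is_lm_fSH F le_order (h_sub Afam))) mnm_set_le T_H.
rewrite (is_lm_uniq le_order lm_g (is_lm_sqX F le_order i)); apply/mnm_lepP => /(_ i).
by rewrite mulmnE mnm1E eqxx mnm_setE; case: (i \in T).
Qed.

Lemma subset_ind_Ffam_reduce A T x : A \in fam -> A \subset T -> x \in Ffam fam h ->
  K T x = \sum_(J : {set 'I_n} | J \proper A) - fSH_coef F A (h A) J * K (T :\: A :|: J) x.
Proof.
move=> Afam sAT xF; set a := fSH_coef F A (h A).
have := meval_Gbasis_Ffam xF (fSH_in_Gbasis Afam).
rewrite fSH_mlin ?h_sub // meval_mlin (bigD1 A) //= fSH_coef_id ?h_sub // mul1r -/a.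
move/eqP; rewrite addr_eq0 => /eqP KA.
rewrite -{1}(setID T A) (setIidPr sAT) subset_indU KA mulNr mulr_suml -sumrN.
rewrite (bigID (fun J : {set 'I_n} => J \subset A)) /= [X in _ + X]big1 ?addr0
  => [|J /andP [_ nsJA]].
  apply: eq_big => [J | J _]; first by rewrite properEneq andbC.
  by rewrite mulNr -mulrA -subset_indU setUC.
have [-> | /fSH_coef_sub sJA] := eqVneq (a J) 0; first by rewrite !mul0r oppr0.
by rewrite sJA in nsJA.
Qed.

Lemma subset_ind_spanned T : T \notin Hfam fam ->
  spanned K [set T' in Hfam fam | #|T'| < #|T|]%N (Ffam fam h) (K T).
Proof.
move: {2}#|T|.+1 (ltnSn #|T|) => k; elim: k T => // k IH T lt_Tk /HfamPn [A Afam sAT].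
have [e T_e] : spanned K [set T' in Hfam fam | #|T'| < #|T|]%N (Ffam fam h)
    (fun x => \sum_(J : {set 'I_n} | J \proper A) - fSH_coef F A (h A) J * K (T :\: A :|: J) x).
  apply: spanned_sum => J pJA _.
  have lt_TJ : (#|T :\: A :|: J| < #|T|)%N.
    rewrite -(cardsID A T) (setIidPr sAT) addnC; apply: leq_ltn_trans (leq_card_setU _ _) _.
    by rewrite ltn_add2l proper_card.
  have [TJ_H | TJ_nH] := boolP (T :\: A :|: J \in Hfam fam).
    by apply: spanned_row; rewrite inE TJ_H.
  apply: spanned_subset (IH _ (leq_trans lt_TJ lt_Tk) TJ_nH).
  by apply/subsetP => T'; rewrite !inE => /andP [-> /ltn_trans]; apply.
by exists e => x xF; rewrite (subset_ind_Ffam_reduce Afam sAT xF) T_e.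
Qed.

Lemma Ffam_rows_indep : rows_indep (fun x T => K T x) (Ffam fam h) (Hfam fam).
Proof.
move=> a rel_a; apply: (subset_ind_rows_indep (Q := Ffam fam h)) => T _.
have [TH | TnH] := boolP (T \in Hfam fam); first exact: rel_a.
by apply: spanned_orth (subset_ind_spanned TnH) _ => T' /setIdP [T'H _]; apply: rel_a.
Qed.

Lemma Hfam_coef_eq0 (d : {set 'I_n} -> F) T0 :
  rows_indep K (Hfam fam) (Ffam fam h) ->
  (forall x, x \in Ffam fam h -> \sum_T d T * K T x = 0) ->
  (forall T, d T != 0 -> (#|T| <= #|T0|)%N) -> T0 \in Hfam fam -> d T0 = 0.
Proof.
move=> indep rel_d card_d T0H.
have [e d_e] : spanned K [set T in Hfam fam | T != T0] (Ffam fam h)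
    (fun x => \sum_(T | T != T0) d T * K T x).
  apply: spanned_sum => T neq_T nz_T.
  have [TH | TnH] := boolP (T \in Hfam fam); first by apply: spanned_row; rewrite inE TH.
  apply: spanned_subset (subset_ind_spanned TnH); apply/subsetP => T'; rewrite !inE.
  case/andP=> -> lt_T'; apply: contraTneq lt_T' => ->; rewrite -leqNgt; exact: card_d.
pose c T := if T == T0 then d T0 else e T.
have := indep c _ T0 T0H; rewrite /c eqxx; apply=> x xF.
rewrite -[RHS](rel_d x xF) (bigD1 T0) //= [RHS](bigD1 T0) //= eqxx d_e //; congr (_ + _).
by apply: eq_big => [T | T /andP [_ /negbTE ->]]; rewrite ?inE.
Qed.

Lemma groebner_rows_indep le : term_order le -> groebner le G (in_ideal G) ->
  rows_indep K (Hfam fam) (Ffam fam h).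
Proof.
move=> le_order [_ gb] c rel_c T TH; apply/eqP; apply: contraT => nz_cT.
pose a T := if T \in Hfam fam then c T else 0.
have p_ideal : in_ideal G (mlin a).
  apply: mlin_in_ideal => x xF; rewrite meval_mlin -[RHS](rel_c x xF) [RHS]big_mkcond.
  by apply: eq_bigr => T' _; rewrite /a; case: ifP; rewrite ?mul0r.
have nz_p : mlin a != 0.
  apply: contra_neq nz_cT => p0.
  by have := mcoeff_mlin a T; rewrite p0 mcoeff0 /a TH => /esym.
have [g gG [mg [mf [lm_g lm_p le_m]]]] := gb _ p_ideal nz_p.
have [T' mfE a_T'] := msupp_mlin lm_p.1.
have T'H : T' \in Hfam fam by move: a_T'; rewrite /a; case: ifP; rewrite ?eqxx.
by have := Gbasis_lm_not_le_Hfam le_order gG lm_g T'H; rewrite -mfE le_m.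
Qed.

Lemma mlead_ideal_notin_Hfam f T : rows_indep K (Hfam fam) (Ffam fam h) ->
  in_ideal G f -> f != 0 -> mlead f = mnm_set T -> T \notin Hfam fam.
Proof.
move=> indep f_ideal nz_f lead; apply/negP => TH.
suff : set_coef f T = 0 by rewrite set_coef_mlead // => /eqP; rewrite mleadc_eq0 (negbTE nz_f).
apply: Hfam_coef_eq0 indep _ _ TH => [x xF | T'].
  by rewrite -meval_chi; apply: meval_in_ideal f_ideal (meval_Gbasis_Ffam xF).
by move/set_coef_card; rewrite lead mdeg_mnm_set.
Qed.

Lemma rows_indep_groebner : rows_indep K (Hfam fam) (Ffam fam h) ->
  groebner (fun m1 m2 : 'X_{1..n} => (m1 <= m2)%O) G (in_ideal G).
Proof.
move=> indep; split=> [g /mem_in_ideal // | f f_ideal nz_f].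
have lm_f := is_lm_mlead nz_f; have le_order := mnmc_term_order n.
have [/existsP [i gt1] | /existsPn le1] := boolP [exists i, 1 < mlead f i]%N.
  exists ('X_i ^+ 2 - 'X_i); first exact: sqX_in_Gbasis.
  exists (U_(i) *+ 2)%MM, (mlead f); split=> //; first exact: is_lm_sqX.
  by apply/mnm_lepP => j; rewrite mulmnE mnm1E; case: eqP => [<- | _].
have lead : mlead f = mnm_set (mnm_supp (mlead f)).
  by apply: mnm_set_supp => i; rewrite leqNgt le1.
have /HfamPn [A Afam sA] := mlead_ideal_notin_Hfam indep f_ideal nz_f lead.
exists (fSH F A (h A)); first exact: fSH_in_Gbasis.
exists (mnm_set A), (mlead f); split=> //; first exact: is_lm_fSH (h_sub Afam).
by rewrite lead mnm_set_le.
Qed.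

End GroebnerCriterion.

Theorem theorem22 (F : fieldType) (n : nat) (fam : {set {set 'I_n}})
    (h : {set 'I_n} -> {set 'I_n}) :
  sperner fam ->
  (forall A, A \in fam -> h A \subset A) ->
  ((exists le : rel 'X_{1..n},
       term_order le /\
       groebner le (Gbasis F fam h) (in_ideal (Gbasis F fam h)))
   <-> #|Hfam fam| = #|Ffam fam h|).
Proof.
move=> _ h_sub; have le_FH := rows_indep_card (Ffam_rows_indep (F := F) h_sub).
split=> [[le [le_order gb]] | eq_card].
  apply/eqP; rewrite eqn_leq le_FH andbT.
  exact: rows_indep_card (groebner_rows_indep h_sub le_order gb).
exists (fun m1 m2 => (m1 <= m2)%O); split; first exact: mnmc_term_order.
apply: (rows_indep_groebner h_sub).
exact: rows_indep_tr (Ffam_rows_indep h_sub) eq_card.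
Qed.
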